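(* Fix integers $m\ge 1$ and $n\ge 0$. Let $a=\{a_1,\dots,a_m\}$ and $a'=\{a'_1,\dots,a'_m\}$ be two sets of $m$ positive integers, all different from $1$, each of which is multiplicatively independent. Then $\chi_{\mathcal{A}_n(a)}(t)=\chi_{\mathcal{A}_n(a')}(t)$. That is, the characteristic polynomial of $\mathcal{A}_n(a)$ depends only on $m$ and $n$, as long as the $a_i$ are multiplicatively independent.
   Context: A set $\{a_1,\dots,a_m\}$ of positive rational numbers is multiplicatively independent if $a_1^{i_1}\cdots a_m^{i_m}=1$ with integers $i_1,\dots,i_m$ implies $i_1=\dots=i_m=0$. For a set $a=\{a_1,\dots,a_m\}$ of positive rational numbers different from $1$ and $n\ge 1$, $\mathcal{A}_n(a)$ denotes the hyperplane arrangement in $\mathbb{R}^n$ consisting of the hyperplanes $x_i=0$ ($1\le i\le n$), $x_i=x_j$ ($1\le i<j\le n$), and $x_i=a_rx_j$ ($1\le i\neq j\le n$, $1\le r\le m$); $\mathcal{A}_0(a)$ is the empty arrangement in $\mathbb{R}^0$, with characteristic polynomial $1$. For a finite arrangement $\mathcal{A}$ of affine hyperplanes in $\mathbb{R}^n$, the characteristic polynomial is $\chi_{\mathcal{A}}(t)=\sum_{\mathcal{B}}(-1)^{\#\mathcal{B}}t^{n-\operatorname{rank}(\mathcal{B})}$, the sum over subsets $\mathcal{B}\subseteq\mathcal{A}$ whose hyperplanes have nonempty common intersection, where $\operatorname{rank}(\mathcal{B})$ is the dimension of the span of the normal vectors of the hyperplanes in $\mathcal{B}$ (equivalently $\sum_{x\in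 L(\mathcal{A})}\mu(\hat 0,x)t^{\dim x}$ over the intersection poset). *)

From HB Require Import structures.
From mathcomp Require Import all_boot all_order all_algebra.
Set Implicit Arguments. Unset Strict Implicit. Unset Printing Implicit Defensive.
Import Order.TTheory GRing.Theory Num.Theory.
Local Open Scope ring_scope.

Definition mult_indep (a : seq rat) : Prop :=
  forall e : 'I_(size a) -> int,
    \prod_(r < size a) (a`_r ^ e r) = 1 -> forall r, e r = 0.

Definition evec (n : nat) (i : 'I_n) : 'rV[rat]_n := delta_mx 0 i.

(* Normal vectors of the hyperplanes of A_n(a):
   x_i = 0           : e_i
   x_i = x_j (i<j)   : e_i - e_j
   x_i = a_r x_j (i<>j) : e_i - a_r e_j                                   *)
Definition arr_normals (n : nat) (a : seq rat) : seq 'rV[rat]_n :=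
  [seq evec i | i : 'I_n <- enum 'I_n]
  ++ flatten [seq [seq evec i - evec j | j : 'I_n <- enum 'I_n & (i < j)%N] | i : 'I_n <- enum 'I_n]
  ++ flatten [seq flatten [seq [seq evec i - r *: evec j | r <- a]
                          | j : 'I_n <- enum 'I_n & i != j] | i : 'I_n <- enum 'I_n].

(* Canonical normal of a linear hyperplane: scale so that the first nonzero
   coordinate is 1.  Two nonzero normals define the same (linear) hyperplane
   iff their canonical forms are equal. *)
Definition normz (n : nat) (v : 'rV[rat]_n) : 'rV[rat]_n :=
  (head 0 [seq v 0 k | k <- enum 'I_n & v 0 k != 0])^-1 *: v.

Definition arrA (n : nat) (a : seq rat) : seq 'rV[rat]_n :=
  undup [seq normz v | v <- arr_normals n a].

(* Characteristic polynomial of a central arrangement in dimension n given by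
   a duplicate-free list s of normal vectors:
     chi(t) = sum_{B subset A} (-1)^#B t^(n - rank B),
   (every subset has nonempty common intersection, containing 0). rank B is
   the dimension of the span of the normals in B. *)
Definition char_poly_arr (n : nat) (s : seq 'rV[rat]_n) : {poly rat} :=
  \sum_(B : {set 'I_(size s)})
     ((-1) ^+ #|B|) *: 'X^(subn n (\rank (\matrix_(k < size s, j < n)
                                         (if k \in B then (nth 0 s k) 0 j else 0)))).

(* Every normal of A_n(a) is e_i or e_i - mu e_j, with mu = a_1^p_1 ... a_m^p_m the
   image of an exponent vector p under a character of Z^m, which multiplicative
   independence makes injective.  Gaussian elimination on such vectors, pivoting on
   the i-th coordinate of e_i or of e_i - mu e_j, keeps every vector in one of these
   shapes, and the only test it performs is whether some (1 - mu) e_i vanishes, i.e.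
   whether an exponent vector is 0.  So the rank of every subfamily of normals is the
   same for all injective characters; these ranks determine both which normals define
   the same hyperplane and every term of the characteristic polynomial. *)

From HB Require Import structures.
From mathcomp Require Import all_boot all_order all_algebra.
From mathcomp Require Import ring.
Import Order.TTheory GRing.Theory Num.Theory.
Set Implicit Arguments. Unset Strict Implicit. Unset Printing Implicit Defensive.
Local Open Scope ring_scope.

Section RankOfRows.
Variables (F : fieldType) (n : nat).
Implicit Types (u v w : 'rV[F]_n) (l : seq 'rV[F]_n).

Definition span_seq l : 'M[F]_n := (\sum_(v <- l) <<v>>)%MS.
Definition rank_seq l := \rank (span_seq l).

Lemma span_seq_cons v l : span_seq (v :: l) = (<<v>> + span_seq l)%MS.
Proof. by rewrite /span_seq big_cons. Qed.

Lemma rank_seq_nil : rank_seq [::] = 0%N.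
Proof. by rewrite /rank_seq /span_seq big_nil mxrank0. Qed.

Lemma rank_seq_cons0 l : rank_seq (0 :: l) = rank_seq l.
Proof. by rewrite /rank_seq span_seq_cons genmx0 adds0mx_id. Qed.

Lemma eq_rank_seq_cons u u' l : (u :=: u')%MS -> rank_seq (u :: l) = rank_seq (u' :: l).
Proof. by move=> eq_uu'; rewrite /rank_seq !span_seq_cons (eq_genmx eq_uu'). Qed.

Lemma eq_rank_seq_map (T : Type) (g h : T -> 'rV[F]_n) (s : seq T) :
  (forall x, (g x :=: h x)%MS) -> rank_seq (map g s) = rank_seq (map h s).
Proof.
move=> eq_gh; rewrite /rank_seq /span_seq !big_map.
by congr (\rank _); apply: eq_bigr => x _; apply: eq_genmx.
Qed.

Lemma eqmx_scaled u v : (exists2 c, c != 0 & u = c *: v) -> (u :=: v)%MS.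
Proof. by case=> c c_neq0 ->; apply: eqmx_scale. Qed.

Lemma sub_span_seq v l : v \in l -> (v <= span_seq l)%MS.
Proof.
elim: l => // w l IHl; rewrite inE span_seq_cons => /predU1P[->|/IHl].
  by rewrite -genmxE addsmxSl.
by move/submx_trans; apply; apply: addsmxSr.
Qed.

Lemma span_seq_sub l (B : 'M[F]_n) : {in l, forall v, (v <= B)%MS} -> (span_seq l <= B)%MS.
Proof.
move=> lB; rewrite /span_seq big_seq; elim/big_rec: _ => [|v S /lB vB SB].
  exact: sub0mx.
by rewrite addsmx_sub genmxE vB.
Qed.

Lemma rank_seq_shear v (c : 'rV[F]_n -> F) l :
  rank_seq (v :: l) = rank_seq (v :: [seq w - c w *: v | w <- l]).
Proof.
have v_span l' : (v <= span_seq (v :: l'))%MS by rewrite sub_span_seq ?mem_head.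
have w_span w l' : w \in l' -> (w <= span_seq (v :: l'))%MS.
  by move=> wl'; rewrite sub_span_seq // inE wl' orbT.
apply: eqmx_rank; apply/andP; split; apply: span_seq_sub => w; rewrite inE.
- case/predU1P=> [->|wl]; first exact: v_span.
  rewrite -[w](subrK (c w *: v)); apply: addmx_sub.
    by rewrite w_span // (map_f (fun w => w - c w *: v)).
  exact: scalemx_sub (v_span _).
- case/predU1P=> [->|/mapP[w' w'l ->]]; first exact: v_span.
  apply: addmx_sub; first exact: w_span.
  by rewrite eqmx_opp scalemx_sub ?v_span.
Qed.

Lemma rank_seq_cons_free v (i : 'I_n) l : v 0 i != 0 -> {in l, forall w, w 0 i = 0} ->
  rank_seq (v :: l) = (rank_seq l).+1.
Proof.
move=> vi0 li0; set e : 'cV[F]_n := delta_mx i 0.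
have coordE w : (w <= kermx e)%MS = (w 0 i == 0).
  rewrite sub_kermx -colE; apply/eqP/eqP => [/matrixP/(_ 0 0)|wi0].
    by rewrite !mxE.
  by apply/matrixP => x y; rewrite !mxE !ord1.
have lK : (span_seq l <= kermx e)%MS.
  by apply: span_seq_sub => w /li0 wi0; rewrite coordE wi0.
have v_notin : ~~ (v <= span_seq l)%MS.
  by apply: contra vi0 => /submx_trans/(_ lK); rewrite coordE.
rewrite /rank_seq span_seq_cons; apply/eqP; rewrite eqn_leq; apply/andP; split.
  have v_neq0 : v != 0 by apply: contraNneq vi0 => ->; rewrite mxE.
  have [le_adds _] := mxrank_adds_leqif <<v>>%MS (span_seq l).
  by rewrite genmxE rank_rV v_neq0 in le_adds.
have [le_rank eq_rank] := mxrank_leqif_sup (addsmxSr <<v>>%MS (span_seq l)).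
by rewrite ltn_neqAle le_rank andbT eq_rank addsmx_sub genmxE (negbTE v_notin).
Qed.

Lemma rank_seq_pivot (T : Type) v (i : 'I_n) (g h : T -> 'rV[F]_n) (s : seq T) :
  v 0 i = 1 -> (forall x, (g x - g x 0 i *: v :=: h x)%MS) ->
  rank_seq (v :: map g s) = (rank_seq (map h s)).+1.
Proof.
move=> vi1 gh; rewrite (rank_seq_shear v (fun w => w 0 i)) (@rank_seq_cons_free _ i).
- by rewrite -map_comp; congr _.+1; apply: eq_rank_seq_map.
- by rewrite vi1 oner_neq0.
by move=> _ /mapP[w _ ->]; rewrite !mxE vi1 mulr1 subrr.
Qed.

Lemma rank_seq1 u : rank_seq [:: u] = \rank u.
Proof. by rewrite /rank_seq /span_seq big_seq1 genmxE. Qed.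

Lemma rank_seq2 u v : rank_seq [:: u; v] = \rank (u + v)%MS.
Proof.
by rewrite /rank_seq span_seq_cons /span_seq big_seq1 (adds_eqmx (genmxE u) (genmxE v)).
Qed.

Lemma submx_rank_seq u v : (u <= v)%MS = (rank_seq [:: u; v] == rank_seq [:: v]).
Proof.
have [_ eq_rank] := mxrank_leqif_sup (addsmxSr u v).
by rewrite rank_seq2 rank_seq1 eq_sym eq_rank addsmx_sub submx_refl andbT.
Qed.

Lemma rank_masked_rows (s : seq 'rV[F]_n) (B : {set 'I_(size s)}) :
  \rank (\matrix_(k < size s, j < n) (if k \in B then s`_k 0 j else 0))
  = rank_seq [seq s`_k | k <- map val (enum B)].
Proof.
set M := \matrix_(k, j) _; rewrite /rank_seq /span_seq !big_map big_enum /=.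
have rowM k : row k M = if k \in B then s`_k else 0.
  by apply/rowP => j; rewrite !mxE; case: (k \in B); rewrite ?mxE.
apply: eqmx_rank; apply/andP; split.
  apply/row_subP => k; rewrite rowM; case: ifP => [kB|_]; last exact: sub0mx.
  by rewrite -genmxE (sumsmx_sup k).
by apply/sumsmx_subP => k kB; rewrite genmxE (_ : s`_k = row k M) ?row_sub // rowM kB.
Qed.
End RankOfRows.

Section GainNormals.
Variables (n : nat) (G : zmodType).

(* [GDiff i j g] encodes e_i - chi(g) e_j for a character [chi] of [G], see [gain_vec]. *)
Inductive gain_normal := GZero | GCoord of 'I_n | GDiff of 'I_n & 'I_n & G.

Definition elim_coord (i : 'I_n) (x : gain_normal) : gain_normal :=
  match x with
  | GZero => GZero
  | GCoord k => if i == k then GZero else x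
  | GDiff k l q =>
      if i == k then (if i == l then GZero else GCoord l)
      else if i == l then GCoord k else x
  end.

Definition elim_diff (i j : 'I_n) (g : G) (x : gain_normal) : gain_normal :=
  match x with
  | GZero => GZero
  | GCoord k => if i == k then GCoord j else x
  | GDiff k l q =>
      if i == k then (if i == l then GDiff j j q else GDiff j l (q - g))
      else if i == l then GDiff k j (q + g) else x
  end.

(* Gaussian elimination, [f] accumulating the substitutions made so far. It only
   compares indices and tests exponents against 0, never evaluating a character. *)
Fixpoint elim_rank (s : seq gain_normal) (f : gain_normal -> gain_normal) : nat :=
  if s is x :: s' then
    match f x with
    | GZero => elim_rank s' f
    | GCoord i => (elim_rank s' (elim_coord i \o f)).+1
    | GDiff i j g =>
        if i == j then
          if g == 0 then elim_rank s' f else (elim_rank s' (elim_coord i \o f)).+1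
        else (elim_rank s' (elim_diff i j g \o f)).+1
    end
  else 0%N.

Section Realization.
Variables (F : fieldType) (chi : G -> F).
Hypothesis chiD : {morph chi : p q / p + q >-> p * q}.
Hypothesis chi_neq0 : forall p, chi p != 0.
Hypothesis chi_inj : injective chi.

Definition gain_vec (x : gain_normal) : 'rV[F]_n :=
  match x with
  | GZero => 0
  | GCoord i => delta_mx 0 i
  | GDiff i j g => delta_mx 0 i - chi g *: delta_mx 0 j
  end.

Lemma chi0 : chi 0 = 1.
Proof. by apply: (mulfI (chi_neq0 0)); rewrite -chiD !addr0 mulr1. Qed.

Lemma chiB p q : chi (p - q) = chi p / chi q.
Proof. by rewrite -[in RHS](subrK q p) chiD mulfK. Qed.

Lemma chi_eq1 p : (chi p == 1) = (p == 0).
Proof. by rewrite -chi0 (inj_eq chi_inj). Qed.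

Local Ltac row_ring :=
  apply/rowP => t; rewrite !mxE !eqxx /=;
  repeat match goal with H : is_true (_ != _) |- _ => rewrite (negbTE H) end;
  rewrite /= ?mulr0n ?mulr1n; ring.

Lemma gain_vec_elim_coord i x :
  (gain_vec x - gain_vec x 0 i *: delta_mx 0 i :=: gain_vec (elim_coord i x))%MS.
Proof.
apply: eqmx_scaled.
case: x => [|k|k l q] /=.
- by exists 1; rewrite ?oner_neq0 // mxE scale0r subr0 scaler0.
- case: (eqVneq i k) => [<-|ik]; rewrite /= ?eqxx ?(negbTE ik);
    by exists 1; rewrite ?oner_neq0 //; row_ring.
case: (eqVneq i k) => [<-|ik]; case: (eqVneq i l) => [<-|il];
  rewrite /= ?eqxx ?(negbTE ik) ?(negbTE il).
- by exists 1; rewrite ?oner_neq0 //; row_ring.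
- by exists (- chi q); rewrite ?oppr_eq0 //; row_ring.
all: by exists 1; rewrite ?oner_neq0 //; row_ring.
Qed.

Lemma gain_vec_elim_diff i j g x : i != j ->
  (gain_vec x - gain_vec x 0 i *: gain_vec (GDiff i j g)
   :=: gain_vec (elim_diff i j g x))%MS.
Proof.
move=> ij; have chig_neq0 := chi_neq0 g; apply: eqmx_scaled.
case: x => [|k|k l q] /=.
- by exists 1; rewrite ?oner_neq0 // mxE scale0r subr0 scaler0.
- case: (eqVneq i k) => [<-|ik]; rewrite /= ?eqxx ?(negbTE ik).
    by exists (chi g) => //; row_ring.
  by exists 1; rewrite ?oner_neq0 //; row_ring.
case: (eqVneq i k) => [<-|ik]; case: (eqVneq i l) => [<-|il];
  rewrite /= ?eqxx ?(negbTE ik) ?(negbTE il).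
- by exists (chi g) => //; row_ring.
- exists (chi g) => //; rewrite chiB.
  apply/rowP => t; rewrite !mxE !eqxx /= (negbTE il) /= mulr0n.
  by field.
- by exists 1; rewrite ?oner_neq0 // chiD; row_ring.
by exists 1; rewrite ?oner_neq0 //; row_ring.
Qed.

Lemma rank_seq_gain_vec s f :
  rank_seq (map (gain_vec \o f) s) = elim_rank s f.
Proof.
elim: s f => [|x s IHs] f /=; first exact: rank_seq_nil.
have pivot_coord i : rank_seq (delta_mx 0 i :: map (gain_vec \o f) s)
    = (elim_rank s (elim_coord i \o f)).+1.
  rewrite (rank_seq_pivot (i := i) (h := gain_vec \o (elim_coord i \o f))) ?IHs //.
    by rewrite mxE !eqxx.
  by move=> y; apply: gain_vec_elim_coord.
case: (f x) => [|i|i j g] /=.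
- by rewrite rank_seq_cons0 IHs.
- exact: pivot_coord.
case: (eqVneq i j) => [<-|ij].
  case: (eqVneq g 0) => [->|g_neq0].
    by rewrite chi0 scale1r subrr rank_seq_cons0 IHs.
  rewrite -pivot_coord; apply: eq_rank_seq_cons; apply: eqmx_scaled.
  exists (1 - chi g); first by rewrite subr_eq0 eq_sym chi_eq1.
  by rewrite scalerBl scale1r.
rewrite (rank_seq_pivot (i := i) (h := gain_vec \o (elim_diff i j g \o f))) ?IHs //.
  by rewrite !mxE !eqxx (negbTE ij) /= mulr0 subr0.
by move=> y; apply: (gain_vec_elim_diff g (f y) ij).
Qed.

End Realization.
End GainNormals.

Arguments GZero {n G}.
Arguments GCoord {n G}.
Arguments GDiff {n G}.

Section Normalization.
Variable n : nat.
Implicit Types (u v : 'rV[rat]_n).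

Definition lead_entry u := head 0 [seq u 0 k | k <- enum 'I_n & u 0 k != 0].

Lemma normzE u : normz u = (lead_entry u)^-1 *: u.
Proof. by []. Qed.

Lemma lead_entry_neq0 u : u != 0 -> lead_entry u != 0.
Proof.
move=> u_neq0; have [k uk_neq0] : exists k, u 0 k != 0.
  apply/existsP; apply: contraR u_neq0 => /existsPn u0; apply/eqP/rowP => k.
  by rewrite mxE; apply/eqP; rewrite -[_ == _]negbK u0.
rewrite /lead_entry; case E: [seq _ | _ <- _ & _] => [|x s] /=.
  suff : u 0 k \in [::] by [].
  by rewrite -E; apply: map_f; rewrite mem_filter uk_neq0 mem_enum.
have : x \in [seq u 0 k | k <- enum 'I_n & u 0 k != 0] by rewrite E mem_head.
by case/mapP => j; rewrite mem_filter => /andP[uj_neq0 _] ->.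
Qed.

Lemma lead_entryZ c u : c != 0 -> lead_entry (c *: u) = c * lead_entry u.
Proof.
move=> c_neq0; rewrite /lead_entry.
have -> : [seq (c *: u) 0 k | k <- enum 'I_n & (c *: u) 0 k != 0]
    = [seq c * x | x <- [seq u 0 k | k <- enum 'I_n & u 0 k != 0]].
  rewrite -map_comp (@eq_filter _ _ (fun k => u 0 k != 0)).
    by apply: eq_map => k /=; rewrite mxE.
  by move=> k; rewrite mxE mulf_eq0 negb_or c_neq0.
by case: [seq _ | _ <- _ & _] => /=; rewrite ?mulr0.
Qed.

Lemma normzZ c u : c != 0 -> normz (c *: u) = normz u.
Proof.
move=> c_neq0; rewrite !normzE lead_entryZ // invfM scalerA.
by rewrite mulrAC mulVf // mul1r.
Qed.

Lemma eqmx_normz u : (normz u :=: u)%MS.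
Proof.
have [->|u_neq0] := eqVneq u 0; first by rewrite normzE scaler0.
by rewrite normzE; apply: eqmx_scale; rewrite invr_eq0 lead_entry_neq0.
Qed.

Lemma normz_eq u v : (normz u == normz v) = (u == v)%MS.
Proof.
apply/eqP/idP => [Euv | /andP[/sub_rVP[c ->] vcv]].
  apply/eqmxP; apply: eqmx_trans (eqmx_sym (eqmx_normz u)) _.
  by rewrite Euv; apply: eqmx_normz.
have [c0|c_neq0] := eqVneq c 0; last exact: normzZ.
by move: vcv => /sub_rVP[d ->]; rewrite c0 !scale0r scaler0.
Qed.

End Normalization.

Section FaithfulCharacters.
Variables (n : nat) (G : zmodType) (F1 F2 : fieldType) (chi1 : G -> F1) (chi2 : G -> F2).
Hypotheses (chi1D : {morph chi1 : p q / p + q >-> p * q})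
           (chi2D : {morph chi2 : p q / p + q >-> p * q}).
Hypotheses (chi1_neq0 : forall p, chi1 p != 0) (chi2_neq0 : forall p, chi2 p != 0).
Hypotheses (chi1_inj : injective chi1) (chi2_inj : injective chi2).

Lemma rank_gain_vec_indep (s : seq (gain_normal n G)) :
  rank_seq (map (gain_vec chi1) s) = rank_seq (map (gain_vec chi2) s).
Proof.
by rewrite -[s in LHS]map_id -[s in RHS]map_id -!map_comp !rank_seq_gain_vec.
Qed.

End FaithfulCharacters.

Lemma nth_map_default (T U : Type) (x0 : T) (f : T -> U) (s : seq T) k :
  nth (f x0) (map f s) k = f (nth x0 s k).
Proof.
have [lt_k_s|le_s_k] := ltnP k (size s); first exact: nth_map.
by rewrite !nth_default ?size_map.
Qed.

Lemma undup_map_common (T : Type) (U1 U2 : eqType) (f1 : T -> U1) (f2 : T -> U2)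
    (s : seq T) :
  (forall x y, (f1 x == f1 y) = (f2 x == f2 y)) ->
  exists s', undup (map f1 s) = map f1 s' /\ undup (map f2 s) = map f2 s'.
Proof.
move=> f12; elim: s => [|x s [s' [E1 E2]]] /=; first by exists [::].
have -> : (f1 x \in map f1 s) = (f2 x \in map f2 s).
  by rewrite -!has_pred1 !has_map; apply: eq_has => y /=; apply: f12.
by case: ifP => _; [exists s' | exists (x :: s'); rewrite /= E1 E2].
Qed.

Lemma char_poly_arr_eq n (s1 s2 : seq 'rV[rat]_n) : size s1 = size s2 ->
  (forall ks, rank_seq [seq s1`_k | k <- ks] = rank_seq [seq s2`_k | k <- ks]) ->
  char_poly_arr s1 = char_poly_arr s2.
Proof.
have cpE (s : seq 'rV[rat]_n) : char_poly_arr s = \sum_(B : {set 'I_(size s)})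
    (-1) ^+ #|B| *: 'X^(n - rank_seq [seq s`_k | k <- map val (enum B)]).
  by apply: eq_bigr => B _; rewrite rank_masked_rows.
by move=> size12 rank12; rewrite !cpE size12; apply: eq_bigr => B _; rewrite rank12.
Qed.

(* [x0] is a default element for [nth]; its images must be the zero row. *)
Lemma char_poly_arr_eq_rank n (T : Type) (g1 g2 : T -> 'rV[rat]_n) (x0 : T) (t : seq T) :
  g1 x0 = 0 -> g2 x0 = 0 ->
  (forall u, rank_seq (map g1 u) = rank_seq (map g2 u)) ->
  char_poly_arr (undup [seq normz (g1 x) | x <- t])
  = char_poly_arr (undup [seq normz (g2 x) | x <- t]).
Proof.
move=> g1x0 g2x0 rank12.
have [t' [-> ->]] : exists t',
    undup [seq normz (g1 x) | x <- t] = [seq normz (g1 x) | x <- t'] /\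
    undup [seq normz (g2 x) | x <- t] = [seq normz (g2 x) | x <- t'].
  apply: undup_map_common => x y.
  rewrite !normz_eq !submx_rank_seq.
  by rewrite (rank12 [:: x; y]) (rank12 [:: y; x]) (rank12 [:: x]) (rank12 [:: y]).
apply: char_poly_arr_eq => [|ks]; first by rewrite !size_map.
have nthE (g : T -> 'rV[rat]_n) k : g x0 = 0 ->
    [seq normz (g x) | x <- t']`_k = normz (g (nth x0 t' k)).
  move=> gx0; have normz_gx0 : normz (g x0) = 0 by rewrite gx0 normzE scaler0.
  by rewrite -normz_gx0; apply: (nth_map_default x0 (fun x => normz (g x))).
rewrite (eq_map (fun k => nthE g1 k g1x0)) (eq_map (fun k => nthE g2 k g2x0)).
rewrite !(eq_rank_seq_map _ (fun x => eqmx_normz _)).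
by rewrite (map_comp g1 (nth x0 t')) (map_comp g2 (nth x0 t')) rank12.
Qed.

Section Monomials.
Variable m : nat.
Local Notation exponent := {ffun 'I_m -> int}.

Definition unit_exponent (r : 'I_m) : exponent := [ffun k => ((k == r) : nat)%:Z].

Definition monomial (a : seq rat) (p : exponent) : rat := \prod_(r < m) a`_r ^ p r.

Lemma monomial0 a : monomial a 0 = 1.
Proof. by rewrite /monomial big1 // => r _; rewrite ffunE expr0z. Qed.

Lemma monomial_unit a r : monomial a (unit_exponent r) = a`_r.
Proof.
rewrite /monomial (bigD1 r) //= big1 ?mulr1; first by rewrite ffunE eqxx expr1z.
by move=> k kr; rewrite ffunE (negbTE kr) expr0z.
Qed.

Definition gain_normals n : seq (gain_normal n exponent) :=
  [seq GCoord i | i : 'I_n <- enum 'I_n]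
  ++ flatten [seq [seq GDiff i j 0 | j : 'I_n <- enum 'I_n & (i < j)%N]
             | i : 'I_n <- enum 'I_n]
  ++ flatten [seq flatten [seq [seq GDiff i j (unit_exponent r) | r : 'I_m <- enum 'I_m]
                          | j : 'I_n <- enum 'I_n & i != j] | i : 'I_n <- enum 'I_n].

Lemma arr_normals_gain n a : size a = m ->
  arr_normals n a = map (gain_vec (monomial a)) (gain_normals n).
Proof.
move=> size_a; have enum_a : [seq a`_r | r : 'I_m <- enum 'I_m] = a.
  by rewrite (map_comp (nth 0 a) val) val_enum_ord -size_a map_nth_iota0 ?take_size.
rewrite /arr_normals /gain_normals !map_cat; congr (_ ++ _ ++ _).
- by rewrite -map_comp.
- rewrite map_flatten -map_comp; congr flatten; apply: eq_map => i /=.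
  by rewrite -map_comp; apply: eq_map => j /=; rewrite monomial0 scale1r.
rewrite map_flatten -map_comp; congr flatten; apply: eq_map => i /=.
rewrite map_flatten -map_comp; congr flatten; apply: eq_map => j /=.
rewrite -map_comp -[in LHS]enum_a -map_comp; apply: eq_map => r /=.
by rewrite monomial_unit.
Qed.

Variable a : seq rat.
Hypothesis a_neq0 : forall r : 'I_m, a`_r != 0.

Lemma monomialD : {morph monomial a : p q / p + q >-> p * q}.
Proof.
move=> p q; rewrite /monomial -big_split; apply: eq_bigr => r _.
by rewrite ffunE exprzDr // unitfE.
Qed.

Lemma monomial_neq0 p : monomial a p != 0.
Proof. by apply/prodf_neq0 => r _; apply: expfz_neq0. Qed.

Lemma monomial_inj : size a = m -> mult_indep a -> injective (monomial a).
Proof.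
move=> size_a; rewrite /mult_indep size_a => indep p q Epq.
apply/eqP; rewrite -subr_eq0; apply/eqP/ffunP => r; rewrite [RHS]ffunE.
apply: (indep (p - q)); change (monomial a (p - q) = 1).
by apply: (mulIf (monomial_neq0 q)); rewrite -monomialD subrK mul1r.
Qed.

End Monomials.

Lemma nth_natr_neq0 m (b : seq nat) : size b = m -> {in b, forall x, (0 < x)%N} ->
  forall r : 'I_m, [seq (x%:R : rat) | x <- b]`_r != 0.
Proof.
move=> size_b b_gt0 r; have r_lt : (r < size b)%N by rewrite size_b.
by rewrite (nth_map 0%N) // pnatr_eq0 -lt0n b_gt0 ?mem_nth.
Qed.

Theorem theorem2p1 (m n : nat) (a a' : seq nat) :
  (1 <= m)%N ->
  size a = m -> size a' = m -> uniq a -> uniq a' ->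
  (forall x, x \in a -> (0 < x)%N /\ x <> 1%N) ->
  (forall x, x \in a' -> (0 < x)%N /\ x <> 1%N) ->
  mult_indep [seq (x%:R : rat) | x <- a] ->
  mult_indep [seq (x%:R : rat) | x <- a'] ->
  char_poly_arr (arrA n [seq (x%:R : rat) | x <- a])
  = char_poly_arr (arrA n [seq (x%:R : rat) | x <- a']).
Proof.
move=> _ size_a size_a' _ _ a_pos a'_pos indep indep'.
have a_neq0 := nth_natr_neq0 size_a (fun x xa => (a_pos x xa).1).
have a'_neq0 := nth_natr_neq0 size_a' (fun x xa => (a'_pos x xa).1).
rewrite /arrA !(arr_normals_gain (m := m)) ?size_map // -!map_comp.
apply: (char_poly_arr_eq_rank (x0 := GZero)) => // u.
apply: rank_gain_vec_indep.
- exact: monomialD.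
- exact: monomialD.
- exact: monomial_neq0.
- exact: monomial_neq0.
- by apply: monomial_inj; rewrite ?size_map.
by apply: monomial_inj; rewrite ?size_map.
Qed.
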